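(* For all $a,b>0$, $$H(a,b)\le\lambda_{-1}(a,b)\le G(a,b)\le\lambda_0(a,b)\le L(a,b)\le\lambda_1(a,b)\le I(a,b).$$
   Context: For $a,b>0$ with $a\neq b$ define $$\lambda_{-1}(a,b)=\dfrac{2\log\frac{a+b}{2}-\log a-\log b}{\frac{1}{2a}+\frac{1}{2b}-\frac{2}{a+b}},\quad \lambda_0(a,b)=\dfrac{a\log a+b\log b-(a+b)\log\frac{a+b}{2}}{2\log\frac{a+b}{2}-\log a-\log b},$$ $$\lambda_1(a,b)=\dfrac{(b-a)^2}{4\left(a\log a+b\log b-(a+b)\log\frac{a+b}{2}\right)},$$ and $\lambda_s(a,a)=a$. Here $H(a,b)=2(1/a+1/b)^{-1}$, $G(a,b)=\sqrt{ab}$, $L(a,b)=\frac{b-a}{\log b-\log a}$, $I(a,b)=\frac1e(b^b/a^a)^{1/(b-a)}$ for $a\neq b$, with $L(a,a)=I(a,a)=a$. *)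

From Stdlib Require Import Reals.
Open Scope R_scope.

Definition Hm (a b : R) : R := 2 / (/ a + / b).
Definition Gm (a b : R) : R := sqrt (a * b).
Definition Lm (a b : R) : R :=
  if Req_EM_T a b then a else (b - a) / (ln b - ln a).
Definition Im (a b : R) : R :=
  if Req_EM_T a b then a
  else / exp 1 * Rpower (Rpower b b / Rpower a a) (/ (b - a)).

Definition lam_m1 (a b : R) : R :=
  if Req_EM_T a b then a else
  (2 * ln ((a + b) / 2) - ln a - ln b) /
  (/ (2 * a) + / (2 * b) - 2 / (a + b)).

Definition lam_0 (a b : R) : R :=
  if Req_EM_T a b then a else
  (a * ln a + b * ln b - (a + b) * ln ((a + b) / 2)) /
  (2 * ln ((a + b) / 2) - ln a - ln b).

Definition lam_1 (a b : R) : R :=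
  if Req_EM_T a b then a else
  (b - a) ^ 2 / (4 * (a * ln a + b * ln b - (a + b) * ln ((a + b) / 2))).

(* All seven means are symmetric and homogeneous of degree one, so it suffices to
   treat a = A (1 - t), b = A (1 + t) with A > 0 and 0 < t < 1.  In these
   coordinates every mean is A times an explicit function of t built from
     Lf t = ln (1 + t) - ln (1 - t),   Sf t = - ln (1 - t^2),   Ef t = t Lf t - Sf t,
   namely H = A (1 - t^2), lambda_{-1} = A (1 - t^2) Sf / t^2, G = A sqrt (1 - t^2),
   lambda_0 = A Ef / Sf, L = 2 A t / Lf, lambda_1 = A t^2 / Ef and
   I = A exp (Lf / (2 t) - Sf / 2 - 1).  Each of the six comparisons is thereby
   reduced to an inequality between elementary functions of t on [0, 1).

   These one-variable inequalities are all proved by the same device: a function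
   vanishing at 0 (or bounded below near 0) with a nonnegative derivative is
   nonnegative.  The comparison lambda_0 <= L needs a chain of four successive
   derivatives (Phi, Phi1, Phi2, Phi3), G <= lambda_0 is proved after the
   substitution t = 2u / (1 + u^2), which rationalises sqrt (1 - t^2), and
   lambda_1 <= I is the monotonicity of the log-ratio Om = ln (I / lambda_1) on
   (0, 1), whose limit at 0 is 0.  The theorem then follows by symmetry, with the
   degenerate case a = b checked directly. *)

From Stdlib Require Import Reals Lra Psatz.
From Coquelicot Require Import Coquelicot.
(* Defs is imported after Coquelicot so that [Im] denotes the identric mean. *)
From Pilot Require Import Defs.
Open Scope R_scope.

Ltac side := repeat split; try intro; nra.
Ltac derive := auto_derive; [side | unfold Rminus; field; side].

Lemma nondecreasing_of_deriv (f f' : R -> R) (a b : R) : a <= b ->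
  (forall x, a <= x <= b -> is_derive f x (f' x)) ->
  (forall x, a < x < b -> 0 <= f' x) -> f a <= f b.
Proof.
intros hab hd hpos.
destruct (Req_dec a b) as [<-|nab]; [lra|].
destruct (MVT_cor2 f f' a b ltac:(lra)) as [c [hfc hc]].
- intros x hx. apply is_derive_Reals, hd. lra.
- assert (0 <= f' c * (b - a)) by (apply Rmult_le_pos; [apply hpos|]; lra). lra.
Qed.

Lemma le_from_zero (g h d : R -> R) (t : R) : 0 <= t < 1 -> g 0 = h 0 ->
  (forall x, 0 <= x < 1 -> is_derive (fun y => h y - g y) x (d x)) ->
  (forall x, 0 < x < 1 -> 0 <= d x) -> g t <= h t.
Proof.
intros ht h0 hd hpos.
enough (h 0 - g 0 <= h t - g t) by lra.
apply (nondecreasing_of_deriv (fun y => h y - g y) d); try lra.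
- intros x hx. apply hd. lra.
- intros x hx. apply hpos. lra.
Qed.

Lemma ln_le_sub1 x : 0 < x -> ln x <= x - 1.
Proof. intros hx. pose proof (exp_ineq1_le (ln x)) as h. rewrite exp_ln in h; lra. Qed.

Lemma le_frac a c d : 0 < d -> a * d <= c -> a <= c / d.
Proof.
intros hd h. replace a with (a * d * / d) by (field; lra).
apply Rmult_le_compat_r; [left; apply Rinv_0_lt_compat |]; lra.
Qed.

Lemma frac_le a c d : 0 < d -> c <= a * d -> c / d <= a.
Proof.
intros hd h. replace a with (a * d * / d) by (field; lra).
apply Rmult_le_compat_r; [left; apply Rinv_0_lt_compat |]; lra.
Qed.

Lemma frac_le_frac a b c d : 0 < b -> 0 < d -> a * d <= c * b -> a / b <= c / d.
Proof.
intros hb hd h.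
replace (a / b) with (a * d * / (b * d)) by (field; lra).
replace (c / d) with (c * b * / (b * d)) by (field; lra).
apply Rmult_le_compat_r; [left; apply Rinv_0_lt_compat; nra | exact h].
Qed.

Definition Lf (t : R) : R := ln (1 + t) - ln (1 - t).
Definition Sf (t : R) : R := - (ln (1 + t) + ln (1 - t)).
Definition Ef (t : R) : R := t * Lf t - Sf t.

Lemma ln_1_plus_0 : ln (1 + 0) = 0.
Proof. rewrite Rplus_0_r. apply ln_1. Qed.
Lemma ln_1_minus_0 : ln (1 - 0) = 0.
Proof. rewrite Rminus_0_r. apply ln_1. Qed.

Ltac at_zero := cbv beta; unfold Ef, Lf, Sf; rewrite ?ln_1_plus_0, ?ln_1_minus_0; field.

Lemma Lf_lower t : 0 <= t < 1 -> 2 * t <= Lf t.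
Proof.
intros ht. apply (le_from_zero (fun x => 2 * x) Lf (fun x => 2 * x^2 / (1 - x^2)) t ht).
- at_zero.
- intros x hx. unfold Lf. derive.
- intros x hx. apply Rle_mult_inv_pos; nra.
Qed.

Lemma Sf_lower t : 0 <= t < 1 -> t^2 <= Sf t.
Proof.
intros ht. apply (le_from_zero (fun x => x^2) Sf (fun x => 2 * x^3 / (1 - x^2)) t ht).
- at_zero.
- intros x hx. unfold Sf. derive.
- intros x hx. apply Rle_mult_inv_pos; nra.
Qed.

Lemma Ef_lower t : 0 <= t < 1 -> t^2 <= Ef t.
Proof.
intros ht. apply (le_from_zero (fun x => x^2) Ef (fun x => Lf x - 2 * x) t ht).
- at_zero.
- intros x hx. unfold Ef, Sf, Lf. derive.
- intros x hx. pose proof (Lf_lower x). lra.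
Qed.

Lemma Ef_pos x : 0 < x < 1 -> 0 < Ef x.
Proof. intros hx. pose proof (Ef_lower x). nra. Qed.

(* Sf t = ln (1 / (1 - t^2)) <= t^2 / (1 - t^2). *)
Lemma Sf_upper x : 0 <= x < 1 -> Sf x <= x^2 / (1 - x^2).
Proof.
intros hx.
replace (Sf x) with (ln (/ (1 - x^2))).
- replace (x^2 / (1 - x^2)) with (/ (1 - x^2) - 1) by (field; nra).
  apply ln_le_sub1, Rinv_0_lt_compat. nra.
- unfold Sf. rewrite ln_Rinv, <- ln_mult by nra. f_equal. f_equal. ring.
Qed.

Lemma Lf_upper t : 0 <= t < 1 -> Lf t <= 2 * t / (1 - t^2).
Proof.
intros ht.
apply (le_from_zero Lf (fun x => 2 * x / (1 - x^2)) (fun x => 4 * x^2 / (1 - x^2)^2) t ht).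
- at_zero.
- intros x hx. unfold Lf. derive.
- intros x hx. apply Rle_mult_inv_pos; [nra | apply pow_lt; nra].
Qed.

(* t Lf t <= 2 Sf t; this is the comparison L <= lambda_1. *)
Lemma Lf_Sf t : 0 <= t < 1 -> t * Lf t <= 2 * Sf t.
Proof.
intros ht. apply (le_from_zero (fun x => x * Lf x) (fun x => 2 * Sf x)
  (fun x => 2 * x / (1 - x^2) - Lf x) t ht).
- at_zero.
- intros x hx. unfold Sf, Lf. derive.
- intros x hx. pose proof (Lf_upper x). lra.
Qed.

(* Phi >= 0 is the comparison lambda_0 <= L.  Its derivative is
   2 Phi1 / (1 - x^2), Phi1' = Phi2 and Phi2' = Phi3, while
   Phi3' = 4 (2 Lf x - 4 x + x^3) / (1 - x^2)^2 >= 0 by Lf x >= 2x; all four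
   vanish at 0, so nonnegativity propagates back from Phi3 to Phi. *)
Definition Phi3 (x : R) : R := 6 - 3 * (2 / (1 - x^2)) - 2 * Sf x - 4 * x^2 / (1 - x^2)
  + Lf x ^ 2 + 2 * x * Lf x * (2 / (1 - x^2)).
Definition Phi2 (x : R) : R := 6 * x - 3 * Lf x - 2 * x * Sf x + x * Lf x ^ 2.
Definition Phi1 (x : R) : R :=
  2 * x^2 - x * Lf x + Sf x * (2 - x^2) - (1 - x^2) * Lf x ^ 2 / 2.
Definition Phi (x : R) : R := Sf x * (Lf x + 2 * x) - x * Lf x ^ 2.

Ltac phi_zero := cbv beta; unfold Phi, Phi1, Phi2, Phi3; at_zero.
Ltac phi_derive := unfold Phi, Phi1, Phi2, Phi3, Sf, Lf; derive.

Lemma Phi3_nonneg t : 0 <= t < 1 -> 0 <= Phi3 t.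
Proof.
intros ht.
apply (le_from_zero (fun _ => 0) Phi3
  (fun x => 4 * (2 * Lf x - 4 * x + x^3) / (1 - x^2)^2) t ht).
- phi_zero.
- intros x hx. phi_derive.
- intros x hx. pose proof (Lf_lower x). apply Rle_mult_inv_pos; [nra | apply pow_lt; nra].
Qed.

Lemma Phi2_nonneg t : 0 <= t < 1 -> 0 <= Phi2 t.
Proof.
intros ht. apply (le_from_zero (fun _ => 0) Phi2 Phi3 t ht).
- phi_zero.
- intros x hx. phi_derive.
- intros x hx. apply Phi3_nonneg. lra.
Qed.

Lemma Phi1_nonneg t : 0 <= t < 1 -> 0 <= Phi1 t.
Proof.
intros ht. apply (le_from_zero (fun _ => 0) Phi1 Phi2 t ht).
- phi_zero.
- intros x hx. phi_derive.
- intros x hx. apply Phi2_nonneg. lra.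
Qed.

Lemma Phi_nonneg t : 0 <= t < 1 -> 0 <= Phi t.
Proof.
intros ht. apply (le_from_zero (fun _ => 0) Phi (fun x => 2 * Phi1 x / (1 - x^2)) t ht).
- phi_zero.
- intros x hx. phi_derive.
- intros x hx. pose proof (Phi1_nonneg x). apply Rle_mult_inv_pos; nra.
Qed.

(* -2 r ln r <= 1 - r^2 on (0, 1]; with r = sqrt (1 - t^2) this is lambda_{-1} <= G. *)
Lemma r_log_r r : 0 < r <= 1 -> - (2 * r * ln r) <= 1 - r^2.
Proof.
intros hr.
enough (r^2 - 1 - 2 * r * ln r <= 1^2 - 1 - 2 * 1 * ln 1) by (rewrite ln_1 in *; lra).
apply (nondecreasing_of_deriv (fun x => x^2 - 1 - 2 * x * ln x) (fun x => 2 * (x - 1 - ln x)));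
  try lra.
- intros x hx. auto_derive; [lra | field; lra].
- intros x hx. pose proof (ln_le_sub1 x). lra.
Qed.

(* The inequality behind G <= lambda_0, in the half-angle variable u. *)
Lemma half_angle_ineq u : 0 <= u < 1 -> ln (1 + u^2) - ln (1 + u) - ln (1 - u) <= u * Lf u.
Proof.
intros hu.
apply (le_from_zero (fun x => ln (1 + x^2) - ln (1 + x) - ln (1 - x)) (fun x => x * Lf x)
  (fun x => Lf x - 2 * x / (1 + x^2)) u hu).
- cbv beta. rewrite Rmult_0_l, pow_i, Rplus_0_r, ln_1 by lia. at_zero.
- intros x hx. unfold Lf. derive.
- intros x hx. pose proof (Lf_lower x).
  enough (2 * x / (1 + x^2) <= 2 * x) by lra.
  apply Rmult_le_reg_r with (1 + x^2); [nra|]. field_simplify; nra.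
Qed.

Lemma ln_square_ratio v w : 0 < v -> 0 < w -> ln (v * v * / w) = 2 * ln v - ln w.
Proof. intros hv hw. rewrite !ln_mult, ln_Rinv; try lra; try apply Rinv_0_lt_compat; nra. Qed.

(* G <= lambda_0 along the rational parametrisation t = 2u / (1 + u^2), for
   which sqrt (1 - t^2) = (1 - u^2) / (1 + u^2). *)
Lemma geo_le_Ef_rational u : 0 < u < 1 ->
  (1 - u^2) / (1 + u^2) * Sf (2 * u / (1 + u^2)) <= Ef (2 * u / (1 + u^2)).
Proof.
intros hu. set (t := 2 * u / (1 + u^2)).
assert (hp : ln (1 + t) = 2 * ln (1 + u) - ln (1 + u^2)).
{ rewrite <- ln_square_ratio by nra. f_equal. unfold t. field. nra. }
assert (hq : ln (1 - t) = 2 * ln (1 - u) - ln (1 + u^2)).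
{ rewrite <- ln_square_ratio by nra. f_equal. unfold t. field. nra. }
assert (hdiff : Ef t - (1 - u^2) / (1 + u^2) * Sf t =
  4 / (1 + u^2) * (u * Lf u - (ln (1 + u^2) - ln (1 + u) - ln (1 - u)))).
{ unfold Ef, Sf, Lf. rewrite hp, hq. unfold t. field. nra. }
assert (0 <= 4 / (1 + u^2) * (u * Lf u - (ln (1 + u^2) - ln (1 + u) - ln (1 - u)))).
{ pose proof (half_angle_ineq u ltac:(lra)).
  apply Rmult_le_pos; [apply Rle_mult_inv_pos; nra | lra]. }
lra.
Qed.

Lemma geo_le_Ef t : 0 < t < 1 -> sqrt (1 - t^2) * Sf t <= Ef t.
Proof.
intros ht.
set (r := sqrt (1 - t^2)).
assert (hr2 : r * r = 1 - t^2) by (apply sqrt_sqrt; nra).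
assert (hr : 0 < r) by (apply sqrt_lt_R0; nra).
set (u := t / (1 + r)).
assert (hu : 0 < u < 1).
{ split; unfold u; [apply Rdiv_lt_0_compat; lra|].
  apply Rmult_lt_reg_r with (1 + r); [lra|]. field_simplify; nra. }
assert (hu2 : 1 + u^2 = 2 / (1 + r)).
{ unfold u. field_simplify_eq; [nra | lra]. }
assert (ht_u : t = 2 * u / (1 + u^2)) by (rewrite hu2; unfold u; field; lra).
assert (hr_u : r = (1 - u^2) / (1 + u^2)).
{ replace (1 - u^2) with (2 - (1 + u^2)) by ring. rewrite hu2. field. lra. }
rewrite hr_u, ht_u. now apply geo_le_Ef_rational.
Qed.

(* Om t = ln (I / lambda_1) in normalised coordinates. *)
Definition Om (x : R) : R := Lf x / (2 * x) - Sf x / 2 - 1 - 2 * ln x + ln (Ef x).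

Lemma Om_near_zero e : 0 < e <= 1/2 -> - e <= Om e.
Proof.
intros he. unfold Om.
pose proof (Lf_lower e ltac:(lra)). pose proof (Ef_lower e ltac:(lra)).
pose proof (Sf_upper e ltac:(lra)).
assert (1 <= Lf e / (2 * e)) by (apply Rmult_le_reg_r with (2 * e); [lra | field_simplify; lra]).
assert (2 * ln e <= ln (Ef e)).
{ replace (2 * ln e) with (ln (e * e)) by (rewrite ln_mult; lra). apply ln_le; nra. }
assert (e^2 / (1 - e^2) <= 2 * e).
{ apply Rmult_le_reg_r with (1 - e^2); [nra | field_simplify; nra]. }
lra.
Qed.

Lemma Om_derive x : 0 < x < 1 -> is_derive Om x (Phi x / (2 * x^2 * Ef x)).
Proof.
intros hx. pose proof (Ef_pos x hx).
unfold Om, Phi, Ef, Sf, Lf, Rminus in *. derive.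
Qed.

Lemma nonneg_of_lower_bounds (y d : R) :
  0 < d -> (forall e, 0 < e < d -> - e <= y) -> 0 <= y.
Proof.
intros hd hy. destruct (Rle_or_lt 0 y) as [h|h]; [exact h|].
pose proof (hy (Rmin (d / 2) (- y / 2))).
pose proof (Rmin_l (d / 2) (- y / 2)). pose proof (Rmin_r (d / 2) (- y / 2)).
assert (0 < Rmin (d / 2) (- y / 2)) by (apply Rmin_glb_lt; lra).
lra.
Qed.

Lemma Om_nonneg t : 0 < t < 1 -> 0 <= Om t.
Proof.
intros ht. apply (nonneg_of_lower_bounds _ (Rmin t (1/2))).
- apply Rmin_glb_lt; lra.
- intros e he. pose proof (Rmin_l t (1/2)). pose proof (Rmin_r t (1/2)).
  apply Rle_trans with (Om e); [apply Om_near_zero; lra|].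
  apply (nondecreasing_of_deriv Om (fun x => Phi x / (2 * x^2 * Ef x))); [lra | |].
  + intros x hx. apply Om_derive. lra.
  + intros x hx. pose proof (Ef_pos x ltac:(lra)).
    apply Rle_mult_inv_pos; [apply Phi_nonneg; lra | apply Rmult_lt_0_compat; nra].
Qed.

Lemma normalized_chain t : 0 < t < 1 ->
  1 - t^2 <= (1 - t^2) * Sf t / t^2 /\
  (1 - t^2) * Sf t / t^2 <= sqrt (1 - t^2) /\
  sqrt (1 - t^2) <= Ef t / Sf t /\
  Ef t / Sf t <= 2 * t / Lf t /\
  2 * t / Lf t <= t^2 / Ef t /\
  t^2 / Ef t <= exp (Lf t / (2 * t) - Sf t / 2 - 1).
Proof.
intros ht.
pose proof (Sf_lower t ltac:(lra)) as hS. pose proof (Lf_lower t ltac:(lra)) as hL.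
pose proof (Ef_pos t ht) as hE.
set (r := sqrt (1 - t^2)).
assert (hr2 : r * r = 1 - t^2) by (apply sqrt_sqrt; nra).
assert (hr : 0 < r <= 1).
{ split; [apply sqrt_lt_R0; nra|]. rewrite <- sqrt_1. apply sqrt_le_1_alt. nra. }
repeat apply conj.
- apply le_frac; nra.
- assert (Sf t = - (2 * ln r)).
  { unfold Sf. rewrite <- ln_mult by lra.
    replace ((1 + t) * (1 - t)) with (r * r) by (rewrite hr2; ring).
    rewrite ln_mult by lra. ring. }
  pose proof (r_log_r r hr). apply frac_le; nra.
- pose proof (geo_le_Ef t ht) as hG. fold r in hG. apply le_frac; nra.
- pose proof (Phi_nonneg t ltac:(lra)). unfold Phi, Ef in *. apply frac_le_frac; nra.
- pose proof (Lf_Sf t ltac:(lra)). unfold Ef in *. apply frac_le_frac; nra.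
- pose proof (Om_nonneg t ht) as hOm. unfold Om in hOm.
  rewrite <- (exp_ln (t^2 / Ef t)) by (apply Rdiv_lt_0_compat; nra).
  enough (ln (t^2 / Ef t) <= Lf t / (2 * t) - Sf t / 2 - 1) as [hlt|heq].
  + left. now apply exp_increasing.
  + now rewrite heq.
  + replace (t^2 / Ef t) with (t * t * / Ef t) by (field; lra).
    rewrite ln_square_ratio; lra.
Qed.

Definition mean_chain (a b : R) : Prop :=
  Hm a b <= lam_m1 a b /\ lam_m1 a b <= Gm a b /\ Gm a b <= lam_0 a b /\
  lam_0 a b <= Lm a b /\ Lm a b <= lam_1 a b /\ lam_1 a b <= Im a b.

Lemma Im_exp a b : a <> b -> Im a b = exp ((b * ln b - a * ln a) / (b - a) - 1).
Proof.
intros nab. unfold Im. destruct (Req_EM_T a b) as [e|_]; [contradiction|]. unfold Rpower.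
replace (exp (b * ln b) / exp (a * ln a)) with (exp (b * ln b - a * ln a))
  by (unfold Rminus, Rdiv; rewrite exp_plus, exp_Ropp; reflexivity).
rewrite ln_exp, <- exp_Ropp, <- exp_plus. f_equal. unfold Rdiv. ring.
Qed.

Section Parametrisation.
Variables A t : R.
Hypothesis hA : 0 < A.
Hypothesis ht : 0 < t < 1.
Let a := A * (1 - t).
Let b := A * (1 + t).

Let hS : 0 < Sf t.
Proof. pose proof (Sf_lower t ltac:(lra)). nra. Qed.
Let hL : 0 < Lf t.
Proof. pose proof (Lf_lower t ltac:(lra)). lra. Qed.
Let hE : 0 < Ef t.
Proof. exact (Ef_pos t ht). Qed.
Let hab : a <> b.
Proof. unfold a, b. nra. Qed.
Let ln_a : ln a = ln A + ln (1 - t).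
Proof. apply ln_mult; lra. Qed.
Let ln_b : ln b = ln A + ln (1 + t).
Proof. apply ln_mult; lra. Qed.
Let mid : (a + b) / 2 = A.
Proof. unfold a, b. field. Qed.

Lemma Hm_param : Hm a b = A * (1 - t^2).
Proof. unfold Hm, a, b. field. side. Qed.

Lemma Gm_param : Gm a b = A * sqrt (1 - t^2).
Proof.
unfold Gm. replace (a * b) with (A * A * (1 - t^2)) by (unfold a, b; ring).
rewrite sqrt_mult, sqrt_square; nra.
Qed.

Lemma lam_m1_param : lam_m1 a b = A * ((1 - t^2) * Sf t / t^2).
Proof.
unfold lam_m1. destruct (Req_EM_T a b) as [e|_]; [contradiction|]. rewrite mid.
replace (2 * ln A - ln a - ln b) with (Sf t) by (rewrite ln_a, ln_b; unfold Sf; ring).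
replace (/ (2 * a) + / (2 * b) - 2 / (a + b)) with (t^2 / (A * (1 - t^2)))
  by (unfold a, b; field; side).
field. side.
Qed.

Let entropy : a * ln a + b * ln b - (a + b) * ln A = A * Ef t.
Proof. rewrite ln_a, ln_b. unfold Ef, Sf, Lf, a, b. ring. Qed.

Lemma lam_0_param : lam_0 a b = A * (Ef t / Sf t).
Proof.
unfold lam_0. destruct (Req_EM_T a b) as [e|_]; [contradiction|]. rewrite mid, entropy.
replace (2 * ln A - ln a - ln b) with (Sf t) by (rewrite ln_a, ln_b; unfold Sf; ring).
field. lra.
Qed.

Lemma Lm_param : Lm a b = A * (2 * t / Lf t).
Proof.
unfold Lm. destruct (Req_EM_T a b) as [e|_]; [contradiction|].
replace (ln b - ln a) with (Lf t) by (rewrite ln_a, ln_b; unfold Lf; ring).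
unfold a, b. field. lra.
Qed.

Lemma lam_1_param : lam_1 a b = A * (t^2 / Ef t).
Proof.
unfold lam_1. destruct (Req_EM_T a b) as [e|_]; [contradiction|]. rewrite mid, entropy.
unfold a, b. field. lra.
Qed.

Lemma Im_param : Im a b = A * exp (Lf t / (2 * t) - Sf t / 2 - 1).
Proof.
rewrite Im_exp by exact hab. rewrite <- (exp_ln A) at 1 by lra. rewrite <- exp_plus.
f_equal. rewrite ln_a, ln_b. unfold Lf, Sf, a, b. field. side.
Qed.

Lemma mean_chain_param : mean_chain a b.
Proof.
unfold mean_chain.
rewrite Hm_param, lam_m1_param, Gm_param, lam_0_param, Lm_param, lam_1_param, Im_param.
destruct (normalized_chain t ht) as (h1 & h2 & h3 & h4 & h5 & h6).
repeat apply conj; apply Rmult_le_compat_l; lra.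
Qed.

End Parametrisation.

Lemma mean_chain_sym a b : 0 < a -> 0 < b -> mean_chain b a -> mean_chain a b.
Proof.
intros ha hb. destruct (Req_dec a b) as [<-|nab]; [easy|].
assert (hln : ln b - ln a <> 0) by (intro e; apply nab, ln_inv; lra).
unfold mean_chain. intros H.
replace (Hm a b) with (Hm b a) by (unfold Hm; f_equal; ring).
replace (Gm a b) with (Gm b a) by (unfold Gm; f_equal; ring).
replace (Lm a b) with (Lm b a)
  by (unfold Lm; destruct (Req_EM_T a b), (Req_EM_T b a); try congruence; field; lra).
replace (Im a b) with (Im b a) by (rewrite !Im_exp by congruence; f_equal; field; lra).
replace (lam_m1 a b) with (lam_m1 b a) by (unfold lam_m1; destruct (Req_EM_T a b), (Req_EM_T b a);
  try congruence; rewrite (Rplus_comm b a); f_equal; ring).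
replace (lam_0 a b) with (lam_0 b a) by (unfold lam_0; destruct (Req_EM_T a b), (Req_EM_T b a);
  try congruence; rewrite (Rplus_comm b a); f_equal; ring).
replace (lam_1 a b) with (lam_1 b a) by (unfold lam_1; destruct (Req_EM_T a b), (Req_EM_T b a);
  try congruence; rewrite (Rplus_comm b a); f_equal; ring).
exact H.
Qed.

Lemma mean_chain_diag a : 0 < a -> mean_chain a a.
Proof.
intros ha. unfold mean_chain, Hm, Gm, Lm, Im, lam_m1, lam_0, lam_1.
destruct (Req_EM_T a a) as [_|]; [|congruence].
rewrite sqrt_square by lra. replace (2 / (/ a + / a)) with a by (field; lra). lra.
Qed.

Lemma mean_chain_lt a b : 0 < a -> a < b -> mean_chain a b.
Proof.
intros ha hab.
pose proof (mean_chain_param ((a + b) / 2) ((b - a) / (b + a))) as H.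
replace ((a + b) / 2 * (1 - (b - a) / (b + a))) with a in H by (field; lra).
replace ((a + b) / 2 * (1 + (b - a) / (b + a))) with b in H by (field; lra).
apply H; [lra | split].
- apply Rdiv_lt_0_compat; lra.
- apply Rmult_lt_reg_r with (b + a); [lra | field_simplify; lra].
Qed.

Theorem mainTheorem15 (a b : R) (ha : 0 < a) (hb : 0 < b) :
  Hm a b <= lam_m1 a b /\ lam_m1 a b <= Gm a b /\ Gm a b <= lam_0 a b /\
  lam_0 a b <= Lm a b /\ Lm a b <= lam_1 a b /\ lam_1 a b <= Im a b.
Proof.
fold (mean_chain a b).
destruct (Rtotal_order a b) as [hab | [<- | hba]].
- now apply mean_chain_lt.
- now apply mean_chain_diag.
- apply mean_chain_sym; [exact ha | exact hb |]. now apply mean_chain_lt.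
Qed.
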